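(* Let $T$ be a tree with a root $r$, and let $X\subseteq\|T\|$ be a subspace. Then $X$ is first countable if and only if every $x\in X\cap V(T)$ has only countably many children $t$ with $\lceil t\rceil\cap X\neq\emptyset$.
   Context: For a tree $T$, $\|T\|=V(T)\cup\Omega(T)$, where $\Omega(T)$ is the set of ends (equivalence classes of rays, two rays being equivalent if they share a tail). A region of $T$ is a connected subgraph $C$ with finitely many edges leaving it; $\|C\|$ is $V(C)$ together with the ends of $T$ having a ray in $C$; the sets $\|C\|$ for regions $C$ form a basis of the (compact Hausdorff) topology of $\|T\|$. The tree order: $u\le v$ if $u$ lies on the unique $r$–$v$ path in $T$. The children of $x$ are its neighbours $y$ with $y> x$. For a node $t$, $\lceil t\rceil$ denotes the set of nodes $v\ge t$ together with the ends of $T$ whose ray starting at $r$ passes through $t$. *)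

From Stdlib Require Import List.
Import ListNotations.
Set Implicit Arguments.

Section Trees.
Variable V : Type.
Variable adj : V -> V -> Prop.

Definition simple_graph : Prop :=
  (forall u v, adj u v -> adj v u) /\ (forall u, ~ adj u u).

Fixpoint walk (p : list V) : Prop :=
  match p with
  | [] => True
  | [_] => True
  | x :: ((y :: _) as q) => adj x y /\ walk q
  end.

Definition is_path (p : list V) (u v : V) : Prop :=
  NoDup p /\ walk p /\ head p = Some u /\ last p u = v /\ p <> [].

Definition is_cycle (p : list V) : Prop :=
  NoDup p /\ walk p /\ 3 <= length p /\
  exists x y, head p = Some x /\ last p x = y /\ adj y x.

Definition connected_graph : Prop := forall u v, exists p, is_path p u v.

Definition is_tree : Prop :=
  simple_graph /\ connected_graph /\ (forall p, ~ is_cycle p).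

Definition is_ray (R : nat -> V) : Prop :=
  (forall m n, R m = R n -> m = n) /\ (forall n, adj (R n) (R (S n))).

Definition ray_equiv (R S : nat -> V) : Prop :=
  exists m n, forall k, R (m + k) = S (n + k).

Definition is_end (E : (nat -> V) -> Prop) : Prop :=
  exists R, is_ray R /\ forall S, E S <-> (is_ray S /\ ray_equiv R S).

Definition tend := { E : (nat -> V) -> Prop | is_end E }.

Inductive tpoint := Vtx (v : V) | End (e : tend).

(* Regions, represented by their vertex set C (a connected subgraph of a tree
   is the induced subgraph on its vertex set): nonempty, connected, and only
   finitely many edges leave it. *)
Definition region (C : V -> Prop) : Prop :=
  (exists v, C v) /\
  (forall u v, C u -> C v -> exists p, is_path p u v /\ forall w, In w p -> C w) /\
  (exists l : list (V * V), forall u v, C u -> ~ C v -> adj u v -> In (u, v) l).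

Definition hull (C : V -> Prop) (x : tpoint) : Prop :=
  match x with
  | Vtx v => C v
  | End e => exists R, proj1_sig e R /\ forall n, C (R n)
  end.

Definition topen (U : tpoint -> Prop) : Prop :=
  forall x, U x -> exists C, region C /\ hull C x /\ forall y, hull C y -> U y.

Definition tle (r u v : V) : Prop := exists p, is_path p r v /\ In u p.

Definition child (r x y : V) : Prop := adj x y /\ tle r x y.

(* ⌈t⌉ : vertices v >= t and ends whose ray from r passes through t *)
Definition up (r t : V) (x : tpoint) : Prop :=
  match x with
  | Vtx v => tle r t v
  | End e => exists R, proj1_sig e R /\ R 0 = r /\ exists n, R n = t
  end.

End Trees.

(* A countable family
   is given as a sequence (repetitions allowed; nonempty since the whole space
   is open). *)
Definition first_countable (P : Type) (open : (P -> Prop) -> Prop)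
    (X : P -> Prop) : Prop :=
  forall x, X x ->
    exists B : nat -> P -> Prop,
      (forall n, open (B n) /\ B n x) /\
      (forall U, open U -> U x ->
         exists n, forall y, X y -> B n y -> U y).

Definition countable_set (A : Type) (S : A -> Prop) : Prop :=
  (forall a, ~ S a) \/ exists f : nat -> A, forall a, S a -> exists n, f n = a.

From Stdlib Require Import List Lia Classical ClassicalEpsilon Cantor PeanoNat.
Import ListNotations.
Set Implicit Arguments.
Unset Strict Implicit.

(* A basic open set [||C||] has only finitely many edges leaving [C], so only finitely many
   vertices lie below the outer endpoint of such an edge; every cone [⌈t⌉] whose root [t]
   is not one of them, but whose parent is in [C], lies inside [C].
   Thus a countable base at a vertex [x] only controls countably many children of [x], and
   a child [t] with [⌈t⌉ ∩ X ≠ ∅] that is not controlled yields a neighbourhood of [x]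
   avoiding [⌈t⌉] that no basic set refines on [X]. Conversely, if [g 0, g 1, ...]
   enumerate those children, the regions [⌈x⌉ \ (⌈g 0⌉ ∪ ... ∪ ⌈g (n-1)⌉)] form a base
   at [x] relative to [X]; at an end, the cones along any of its rays form a base. *)

Section Lists.
Variable A : Type.

Lemma last_cons_cons (l : list A) a d : last (a :: l) d = last l a.
Proof.
  revert a d; induction l as [|b l IH]; intros a d; [reflexivity|].
  change (last (b :: l) d = last (b :: l) a). rewrite !IH. reflexivity.
Qed.

Lemma last_app_cons (l m : list A) x d : last (l ++ x :: m) d = last (x :: m) d.
Proof.
  revert d; induction l as [|a l IH]; intro d; [reflexivity|].
  simpl app. rewrite last_cons_cons, IH, !last_cons_cons. reflexivity.
Qed.

Lemma In_last_cons (l : list A) a d : In (last (a :: l) d) (a :: l).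
Proof.
  revert a; induction l as [|b l IH]; intro a; [simpl; auto|].
  rewrite last_cons_cons, (last_cons_cons l b a), <- (last_cons_cons l b d). right. apply IH.
Qed.

Lemma hd_error_rev_app (a : A) l m :
  hd_error (rev (a :: l) ++ m) = Some (last (a :: l) a).
Proof.
  rewrite (app_removelast_last a (l := a :: l)) at 1 by discriminate.
  rewrite rev_app_distr. reflexivity.
Qed.

Lemma NoDup_app_disjoint (l m : list A) x : NoDup (l ++ m) -> In x l -> ~ In x m.
Proof.
  induction l as [|a l IH]; simpl; [tauto|]. intros H [Hx|Hx].
  - subst. inversion H; subst. intro Hm. apply H2. apply in_or_app; auto.
  - inversion H; auto.
Qed.

Lemma not_NoDup_split (l : list A) : ~ NoDup l ->
  exists P x Q R, l = P ++ x :: Q ++ x :: R.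
Proof.
  induction l as [|a l IH]; intro H. { exfalso. apply H. constructor. }
  destruct (classic (In a l)) as [Ha|Ha].
  - apply in_split in Ha. destruct Ha as [Q [R E]]. exists [], a, Q, R. subst. reflexivity.
  - destruct IH as [P [x [Q [R E]]]].
    { intro N. apply H. constructor; auto. }
    exists (a :: P), x, Q, R. subst. reflexivity.
Qed.

Lemma first_common_split (p q : list A) :
  (exists z, In z p /\ In z q) ->
  exists P w P' Q Q', p = P ++ w :: P' /\ q = Q ++ w :: Q' /\
    forall y, In y P -> ~ In y q.
Proof.
  induction p as [|a p IH]; intros [z [Hz Hq]]; [destruct Hz|].
  destruct (classic (In a q)) as [Ha|Ha].
  - apply in_split in Ha. destruct Ha as [Q [Q' HQ]].
    exists [], a, p, Q, Q'. repeat split; auto.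
  - destruct Hz as [Hz|Hz]; [subst; contradiction|].
    destruct IH as [P [w [P' [Q [Q' [H1 [H2 H3]]]]]]]; [eauto|].
    exists (a :: P), w, P', Q, Q'. subst. repeat split; auto.
    intros y [Hy|Hy]; [subst; auto|auto].
Qed.

Lemma NoDup_join_at (u w : A) P P' Q Q' :
  NoDup (u :: P ++ w :: P') -> NoDup (u :: Q ++ w :: Q') ->
  (forall y, In y P -> ~ In y (Q ++ w :: Q')) -> NoDup (u :: P ++ w :: rev Q).
Proof.
  intros Np Nq HP. inversion Np as [|? ? UP NP]. inversion Nq as [|? ? UQ NQ]. subst.
  constructor.
  { intro H. apply in_app_or in H. destruct H as [H|[H|H]].
    - apply UP. apply in_or_app; auto.
    - apply UP. subst. apply in_or_app; right; left; auto.
    - apply UQ. apply in_rev in H. apply in_or_app; auto. }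
  apply NoDup_app.
  { eapply NoDup_app_remove_r; eauto. }
  { constructor.
    - intro H. apply in_rev in H. apply (NoDup_remove_2 _ _ _ NQ). apply in_or_app; auto.
    - apply NoDup_rev. eapply NoDup_app_remove_r; eauto. }
  intros y Hy [H|H].
  { subst. apply (NoDup_remove_2 _ _ _ NP). apply in_or_app; auto. }
  apply in_rev in H. apply (HP y Hy). apply in_or_app; auto.
Qed.

End Lists.

Lemma ex_max_nat (P : nat -> Prop) N : P 0 -> (forall n, N <= n -> ~ P n) ->
  exists m, P m /\ forall j, m < j -> ~ P j.
Proof.
  revert P; induction N as [|N IH]; intros P H0 HN.
  { exfalso. apply (HN 0); auto. }
  destruct (classic (P N)) as [HP|HP].
  - exists N. split; auto.
  - apply IH; auto. intros n Hn. destruct (Nat.eq_dec n N); [subst; auto|]. apply HN. lia.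
Qed.

Section Walks.
Variable V : Type.
Variable adj : V -> V -> Prop.

Lemma walk_app (l m : list V) y :
  walk adj (l ++ y :: m) <-> walk adj (l ++ [y]) /\ walk adj (y :: m).
Proof.
  induction l as [|a l IH]; simpl.
  - destruct m; tauto.
  - destruct l as [|b l]; simpl in *.
    + destruct m; tauto.
    + rewrite IH. tauto.
Qed.

Lemma walk_behead a (l : list V) : walk adj (a :: l) -> walk adj l.
Proof. destruct l; simpl; tauto. Qed.

Lemma walk_prefix (l m : list V) : walk adj (l ++ m) -> walk adj l.
Proof.
  destruct m as [|y m]. { rewrite app_nil_r; auto. }
  intro H. apply walk_app in H. destruct H as [H _].
  destruct l as [|a l] using rev_ind; [simpl; auto|].
  rewrite <- app_assoc in H. simpl in H. apply walk_app in H. tauto.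
Qed.

Lemma walk_suffix (l m : list V) : walk adj (l ++ m) -> walk adj m.
Proof.
  induction l as [|a l IH]; simpl; auto. intro H. apply IH. eapply walk_behead; eauto.
Qed.

Lemma walk_rcons (l : list V) x y :
  walk adj (l ++ [x]) -> adj x y -> walk adj ((l ++ [x]) ++ [y]).
Proof. intros W Hxy. rewrite <- app_assoc. apply walk_app. simpl. auto. Qed.

Lemma walk_rev (Hsym : forall u v, adj u v -> adj v u) (l : list V) :
  walk adj l -> walk adj (rev l).
Proof.
  induction l as [|a l IH]; simpl; auto. intro H.
  destruct l as [|b l]; simpl; auto.
  simpl in IH. destruct H as [Hab Hw]. specialize (IH Hw).
  rewrite <- app_assoc. simpl. apply walk_app. split; auto.
  simpl. auto.
Qed.

Lemma walk_nth (l : list V) d k :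
  walk adj l -> S k < length l -> adj (nth k l d) (nth (S k) l d).
Proof.
  revert k; induction l as [|a l IH]; intros k W Hk; simpl in Hk; [lia|].
  destruct l as [|b l]; simpl in Hk; [lia|].
  destruct W as [Hab W]. destruct k as [|k]; simpl; auto.
  apply (IH k W). simpl. lia.
Qed.

(* Induction on a bound [n] of the length: cut out the closed subwalk between two
   occurrences of a repeated vertex. *)
Lemma walk_to_path : forall n (l : list V), length l <= n -> l <> [] -> walk adj l ->
  exists p, NoDup p /\ walk adj p /\ hd_error p = hd_error l /\
    (forall d, last p d = last l d) /\ p <> [] /\ incl p l.
Proof.
  induction n as [|n IH]; intros l Hlen Hne W.
  { destruct l; simpl in *; [congruence|lia]. }
  destruct (classic (NoDup l)) as [N|N].
  { exists l. repeat split; auto. intros x; auto. }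
  destruct (not_NoDup_split N) as [P [x [Q [R E]]]]. subst l.
  destruct (IH (P ++ x :: R)) as [p [N' [W' [H' [L' [Ne' I']]]]]].
  - rewrite length_app in *. simpl in *. rewrite length_app in Hlen. simpl in Hlen. lia.
  - destruct P; discriminate.
  - apply walk_app in W. destruct W as [W1 W2]. apply walk_app. split; auto.
    change (walk adj ((x :: Q) ++ x :: R)) in W2. apply walk_app in W2. tauto.
  - exists p. repeat split; auto.
    + rewrite H'. destruct P; reflexivity.
    + intro d. rewrite L', !last_app_cons.
      change (last (x :: R) d = last ((x :: Q) ++ x :: R) d). rewrite last_app_cons. auto.
    + intros y Hy. apply I' in Hy. apply in_app_or in Hy. apply in_or_app.
      destruct Hy as [Hy|[Hy|Hy]]; auto; right;
        [left; auto|right; apply in_or_app; right; right; auto].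
Qed.

Lemma walk_exit_edge (C : V -> Prop) : forall l x,
  walk adj (x :: l) -> C x -> ~ C (last (x :: l) x) ->
  exists a b, adj a b /\ C a /\ ~ C b /\ In b l.
Proof.
  induction l as [|y l IH]; intros x W Cx Cl. { contradiction. }
  destruct (classic (C y)) as [Cy|Cy].
  - assert (Cl' : ~ C (last (y :: l) y))
      by (rewrite !last_cons_cons in Cl; rewrite !last_cons_cons; auto).
    destruct (IH y (walk_behead W) Cy Cl') as [a [b [H1 [H2 [H3 H4]]]]].
    exists a, b. repeat split; auto. right; auto.
  - exists x, y. destruct W as [W _]. repeat split; auto. left; auto.
Qed.

End Walks.

Section Tree.
Variable V : Type.
Variable adj : V -> V -> Prop.
Hypothesis HT : is_tree adj.

Lemma tree_sym u v : adj u v -> adj v u.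
Proof. exact (proj1 (proj1 HT) u v). Qed.

Lemma tree_irrefl u : ~ adj u u.
Proof. exact (proj2 (proj1 HT) u). Qed.

Lemma tree_acyclic p : ~ is_cycle adj p.
Proof. exact (proj2 (proj2 HT) p). Qed.

(* Two paths from [u] that leave along different edges and meet again close a cycle:
   follow the first one up to the first vertex [w] it shares with the second, then the
   second one back to [u]. *)
Lemma tree_paths_no_branching u a b p q :
  NoDup (u :: a :: p) -> walk adj (u :: a :: p) ->
  NoDup (u :: b :: q) -> walk adj (u :: b :: q) ->
  last (u :: a :: p) u = last (u :: b :: q) u -> a = b.
Proof.
  intros Np Wp Nq Wq Hl. apply NNPP. intro Hab.
  destruct (@first_common_split _ (a :: p) (b :: q)) as [A [w [P2 [B [Q2 [E1 [E2 HA]]]]]]].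
  { exists (last (a :: p) a). split; [apply In_last_cons|].
    rewrite !last_cons_cons in Hl. rewrite last_cons_cons, Hl, <- last_cons_cons with (d := b).
    apply In_last_cons. }
  apply (@tree_acyclic (u :: A ++ w :: rev B)).
  assert (WB : walk adj (B ++ [w])).
  { apply walk_behead in Wq. rewrite E2 in Wq. apply walk_app in Wq. tauto. }
  assert (WA : walk adj (u :: A ++ [w])).
  { rewrite E1 in Wp. change (walk adj ((u :: A) ++ w :: P2)) in Wp.
    apply walk_app in Wp. tauto. }
  repeat split.
  - rewrite E1 in Np. rewrite E2 in Nq, HA. exact (NoDup_join_at Np Nq HA).
  - change (walk adj ((u :: A) ++ w :: rev B)). apply walk_app. split; auto.
    rewrite <- rev_unit. apply walk_rev; auto. exact tree_sym.
  - simpl. rewrite length_app. simpl. rewrite length_rev.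
    destruct A as [|a' A]; destruct B as [|b' B]; simpl; try lia.
    simpl in E1, E2. inversion E1; inversion E2; subst. congruence.
  - exists u, (last (u :: A ++ w :: rev B) u). repeat split.
    assert (Hub : adj b u) by (apply tree_sym; simpl in Wq; tauto).
    destruct B as [|b' B].
    + change (u :: A ++ w :: rev []) with ((u :: A) ++ [w]). rewrite last_last.
      simpl in E2. inversion E2. subst. exact Hub.
    + simpl in E2. injection E2 as Hb Hq. rewrite Hb in Hub. simpl rev.
      replace (u :: A ++ w :: rev B ++ [b']) with ((u :: A ++ w :: rev B) ++ [b'])
        by (simpl; rewrite <- app_assoc; reflexivity).
      rewrite last_last. exact Hub.
Qed.

Lemma tree_walks_unique : forall p q u, NoDup (u :: p) -> walk adj (u :: p) ->
  NoDup (u :: q) -> walk adj (u :: q) -> last (u :: p) u = last (u :: q) u -> p = q.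
Proof.
  induction p as [|a p IH]; intros q u Np Wp Nq Wq Hl.
  - destruct q as [|b q]; auto. exfalso.
    change (u = last (u :: b :: q) u) in Hl. rewrite last_cons_cons in Hl.
    inversion Nq; subst. apply H1. rewrite Hl at 1. apply In_last_cons.
  - destruct q as [|b q].
    { exfalso. change (last (u :: a :: p) u = u) in Hl. rewrite last_cons_cons in Hl.
      inversion Np; subst. apply H1. rewrite <- Hl at 1. apply In_last_cons. }
    assert (a = b) as <- by exact (tree_paths_no_branching Np Wp Nq Wq Hl).
    f_equal. apply (IH q a).
    + inversion Np; auto.
    + eapply walk_behead; eauto.
    + inversion Nq; auto.
    + eapply walk_behead; eauto.
    + rewrite !last_cons_cons in Hl. rewrite !last_cons_cons. auto.
Qed.

Lemma is_path_cons p u v : is_path adj p u v <->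
  exists p0, p = u :: p0 /\ NoDup p /\ walk adj p /\ last p u = v.
Proof.
  split.
  - intros [N [W [H [L Ne]]]]. destruct p as [|a p0]; [congruence|].
    simpl in H. injection H as ->. exists p0. auto.
  - intros [p0 [-> [N [W L]]]]. repeat split; auto. congruence.
Qed.

Lemma tree_path_unique p q u v : is_path adj p u v -> is_path adj q u v -> p = q.
Proof.
  intros Hp Hq. apply is_path_cons in Hp, Hq.
  destruct Hp as [p0 [-> [N1 [W1 L1]]]]. destruct Hq as [q0 [-> [N2 [W2 L2]]]].
  f_equal. apply (tree_walks_unique N1 W1 N2 W2). congruence.
Qed.

Definition tpath (s v : V) : list V :=
  proj1_sig (constructive_indefinite_description _ (proj1 (proj2 HT) s v)).

Lemma tpath_spec s v : is_path adj (tpath s v) s v.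
Proof. unfold tpath. destruct constructive_indefinite_description; auto. Qed.

Lemma tpath_eq s v p : is_path adj p s v -> tpath s v = p.
Proof. intro H. eapply tree_path_unique; eauto using tpath_spec. Qed.

Lemma tle_tpath s t v : tle adj s t v <-> In t (tpath s v).
Proof.
  split.
  - intros [p [Hp Hin]]. rewrite (tpath_eq Hp). auto.
  - intro H. exists (tpath s v). split; auto using tpath_spec.
Qed.

Lemma is_path_prefix P s v A w B : is_path adj P s v -> P = A ++ w :: B ->
  is_path adj (A ++ [w]) s w.
Proof.
  intros Hp E. apply is_path_cons in Hp. destruct Hp as [p0 [E0 [N [W L]]]].
  assert (E' : P = (A ++ [w]) ++ B) by (rewrite E, <- app_assoc; auto).
  repeat split.
  - rewrite E' in N. eapply NoDup_app_remove_r; eauto.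
  - rewrite E' in W. eapply walk_prefix; eauto.
  - destruct A; simpl in *; congruence.
  - apply last_last.
  - destruct A; discriminate.
Qed.

Lemma is_path_suffix P s v A w B : is_path adj P s v -> P = A ++ w :: B ->
  is_path adj (w :: B) w v.
Proof.
  intros Hp E. apply is_path_cons in Hp. destruct Hp as [p0 [E0 [N [W L]]]].
  repeat split.
  - rewrite E in N. eapply NoDup_app_remove_l; eauto.
  - rewrite E in W. eapply walk_suffix; eauto.
  - rewrite <- L, E, last_app_cons, !last_cons_cons. auto.
  - discriminate.
Qed.

Lemma is_path_head P s v : is_path adj P s v -> In s P.
Proof. intro H. apply is_path_cons in H. destruct H as [p0 [-> _]]. left; auto. Qed.

Lemma is_path_last P s v : is_path adj P s v -> In v P.
Proof.
  intro H. apply is_path_cons in H. destruct H as [p0 [-> [_ [_ L]]]].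
  rewrite <- L. apply In_last_cons.
Qed.

Lemma tle_refl s v : tle adj s v v.
Proof. apply tle_tpath. eapply is_path_last, tpath_spec. Qed.

Lemma tle_root s v : tle adj s s v.
Proof. apply tle_tpath. eapply is_path_head, tpath_spec. Qed.

Lemma tpath_split s v w : In w (tpath s v) ->
  exists A B, tpath s v = A ++ w :: B /\ tpath s w = A ++ [w].
Proof.
  intro H. apply in_split in H. destruct H as [A [B E]]. exists A, B. split; auto.
  apply tpath_eq. eapply is_path_prefix; eauto using tpath_spec.
Qed.

Lemma tle_trans s a b c : tle adj s a b -> tle adj s b c -> tle adj s a c.
Proof.
  rewrite !tle_tpath. intros Ha Hb. destruct (tpath_split Hb) as [A [B [E1 E2]]].
  rewrite E2 in Ha. rewrite E1. apply in_app_or in Ha. apply in_or_app.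
  destruct Ha as [Ha|[Ha|[]]]; auto. subst; right; left; auto.
Qed.

Lemma tle_antisym s a b : tle adj s a b -> tle adj s b a -> a = b.
Proof.
  intros H1 H2. rewrite tle_tpath in H1, H2.
  destruct (tpath_split H1) as [A [B [E1 E2]]]. rewrite E2 in H2.
  apply in_app_or in H2. destruct H2 as [H2|[H2|[]]]; auto.
  exfalso. pose proof (tpath_spec s b) as Hp. apply is_path_cons in Hp.
  destruct Hp as [p0 [_ [N [_ L]]]]. rewrite E1 in N, L.
  rewrite last_app_cons in L.
  apply (NoDup_app_disjoint N H2). rewrite <- L at 1. apply In_last_cons.
Qed.

Lemma is_path_tle_suffix P s v A c B w : is_path adj P s v -> P = A ++ c :: B ->
  In w (c :: B) -> tle adj s c w.
Proof.
  intros Hp E [Hw|Hw]. { subst. apply tle_refl. }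
  apply in_split in Hw. destruct Hw as [B1 [B2 EB]].
  exists ((A ++ c :: B1) ++ [w]). split.
  - apply (is_path_prefix (A := A ++ c :: B1) (B := B2) Hp).
    rewrite E, EB, <- app_assoc. reflexivity.
  - rewrite <- app_assoc. apply in_or_app. right. left. auto.
Qed.

Lemma tpath_edge s u v : adj u v ->
  tpath s v = tpath s u ++ [v] \/ tpath s u = tpath s v ++ [u].
Proof.
  intro Huv. pose proof (tpath_spec s u) as Hp.
  destruct (classic (In v (tpath s u))) as [Hin|Hin].
  - right. destruct (tpath_split Hin) as [A [B [E1 E2]]]. rewrite E2, E1.
    pose proof (is_path_suffix Hp E1) as Hsuf. apply is_path_cons in Hsuf.
    destruct Hsuf as [_ [_ [N [W L]]]].
    destruct B as [|b B].
    { simpl in L. subst. exfalso. exact (tree_irrefl Huv). }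
    destruct B as [|b' B].
    { simpl in L. subst. rewrite <- app_assoc. reflexivity. }
    exfalso. apply (@tree_acyclic (v :: b :: b' :: B)).
    split; [exact N|]. split; [exact W|]. split; [simpl; lia|].
    exists v, u. auto.
  - left. apply tpath_eq.
    apply is_path_cons in Hp. destruct Hp as [p0 [E [N [W L]]]].
    rewrite E. apply is_path_cons. exists (p0 ++ [v]). split; [reflexivity|].
    rewrite E in Hin. split; [|split].
    + apply NoDup_app; auto.
      * rewrite <- E; auto.
      * constructor; auto. constructor.
      * intros a Ha [Hb|[]]. subst. auto.
    + rewrite E in W, L.
      rewrite (app_removelast_last s (l := s :: p0)) by discriminate.
      rewrite (app_removelast_last s (l := s :: p0)) in W by discriminate.
      rewrite L in W |- *. apply walk_rcons; auto.
    + change (last ((s :: p0) ++ [v]) s = v). apply last_last.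
Qed.

Lemma child_not_tle s x t : child adj s x t -> ~ tle adj s t x.
Proof.
  intros [Hxt H1] H2. assert (x = t) by (eapply tle_antisym; eauto). subst.
  exact (tree_irrefl Hxt).
Qed.

Lemma tle_child_exists s x v : tle adj s x v -> v <> x ->
  exists t, child adj s x t /\ tle adj s t v.
Proof.
  intros Hxv Hne. apply tle_tpath in Hxv. apply in_split in Hxv. destruct Hxv as [A [B E]].
  pose proof (is_path_suffix (tpath_spec s v) E) as Hp.
  destruct B as [|t B].
  { destruct Hp as [_ [_ [_ [L _]]]]. simpl in L. congruence. }
  exists t. split; [split|].
  - destruct Hp as [_ [W _]]. destruct W; auto.
  - apply (is_path_tle_suffix (tpath_spec s v) E). right; left; auto.
  - apply (is_path_tle_suffix (A := A ++ [x]) (c := t) (B := B) (tpath_spec s v)).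
    + rewrite E, <- app_assoc. auto.
    + destruct Hp as [_ [_ [_ [L _]]]]. rewrite <- L, last_cons_cons. apply In_last_cons.
Qed.

End Tree.

Section Cones.
Variable V : Type.
Variable adj : V -> V -> Prop.
Hypothesis HT : is_tree adj.
Variable s : V.

Definition cone_minus (c : V) (Bad : V -> Prop) (v : V) : Prop :=
  tle adj s c v /\ forall t, Bad t -> ~ tle adj s t v.

Lemma cone_minus_tpath_suffix c Bad v A B w :
  cone_minus c Bad v -> tpath HT s v = A ++ c :: B -> In w (c :: B) -> cone_minus c Bad w.
Proof.
  intros [_ Hv] E Hw. split.
  - exact (is_path_tle_suffix HT (tpath_spec HT s v) E Hw).
  - intros t Bt Htw. apply (Hv t Bt). apply (tle_trans HT Htw).
    apply (tle_tpath HT). rewrite E. apply in_or_app. right. exact Hw.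
Qed.

Lemma cone_minus_connected c Bad u v :
  cone_minus c Bad u -> cone_minus c Bad v ->
  exists p, is_path adj p u v /\ forall w, In w p -> cone_minus c Bad w.
Proof.
  assert (Suf : forall x, cone_minus c Bad x -> exists B,
      is_path adj (c :: B) c x /\ forall w, In w (c :: B) -> cone_minus c Bad w).
  { intros x Hx. pose proof (proj1 Hx) as Hcx. apply (tle_tpath HT) in Hcx.
    apply in_split in Hcx. destruct Hcx as [A [B E]]. exists B. split.
    - exact (is_path_suffix (tpath_spec HT s x) E).
    - intros w Hw. exact (cone_minus_tpath_suffix Hx E Hw). }
  intros Hu Hv.
  destruct (Suf u Hu) as [Bu [Pu Iu]]. destruct (Suf v Hv) as [Bv [Pv Iv]].
  destruct (@walk_to_path _ adj _ (rev (c :: Bu) ++ Bv) (le_n _)) as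
    [p [N [W [H [Lp [Ne I]]]]]].
  - simpl. rewrite <- app_assoc. simpl. destruct (rev Bu); discriminate.
  - simpl. rewrite <- app_assoc. simpl. apply walk_app. split.
    + change (walk adj (rev (c :: Bu))). apply walk_rev; [apply (tree_sym HT)|apply Pu].
    + apply Pv.
  - exists p. split.
    + split; auto. split; auto. split.
      { rewrite H, hd_error_rev_app. f_equal. apply Pu. }
      split; auto. rewrite Lp. simpl. rewrite <- app_assoc. simpl.
      rewrite last_app_cons. destruct Pv as [_ [_ [_ [Lv _]]]]. rewrite last_cons_cons.
      rewrite last_cons_cons in Lv. auto.
    + intros w Hw. apply I in Hw. apply in_app_or in Hw. destruct Hw as [Hw|Hw].
      * apply Iu. apply in_rev. auto.
      * apply Iv. right; auto.
Qed.

(* An edge leaving the cone goes either from [c] down to its parent or from the parent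
   of a removed vertex [t] up to [t]. *)
Lemma cone_minus_boundary c Bad (L : list V) :
  (forall t, Bad t -> In t L) ->
  exists l : list (V * V), forall u v,
    cone_minus c Bad u -> ~ cone_minus c Bad v -> adj u v -> In (u, v) l.
Proof.
  intros HL.
  exists (map (fun w => (c, w)) (tpath HT s c) ++
          flat_map (fun t => map (fun w => (w, t)) (tpath HT s t)) L).
  intros u v Hu Hv Huv.
  assert (Hlast : forall x, In x (tpath HT s x)) by (intro; eapply is_path_last, tpath_spec).
  destruct (tpath_edge HT s Huv) as [E|E].
  - apply in_or_app. right.
    assert (Hcv : tle adj s c v).
    { apply (tle_tpath HT). rewrite E. apply in_or_app. left. apply (tle_tpath HT), Hu. }
    assert (exists t, Bad t /\ tle adj s t v) as [t [Bt Ht]].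
    { apply NNPP. intro Hn. apply Hv. split; auto. intros t Bt Ht. apply Hn; eauto. }
    apply (tle_tpath HT) in Ht. rewrite E in Ht. apply in_app_or in Ht.
    destruct Ht as [Ht|[Ht|[]]].
    { exfalso. apply (proj2 Hu t Bt). apply (tle_tpath HT). auto. }
    subst t. apply in_flat_map. exists v. split; auto.
    apply in_map_iff. exists u. split; auto. rewrite E. apply in_or_app. left. auto.
  - apply in_or_app. left.
    assert (Hcv : ~ tle adj s c v).
    { intro Hcv. apply Hv. split; auto. intros t Bt Htv. apply (proj2 Hu t Bt).
      apply (tle_trans HT Htv). apply (tle_tpath HT). rewrite E.
      apply in_or_app. left. auto. }
    pose proof (proj1 Hu) as Hcu. apply (tle_tpath HT) in Hcu. rewrite E in Hcu.
    apply in_app_or in Hcu. destruct Hcu as [Hcu|[Hcu|[]]].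
    { exfalso. apply Hcv. apply (tle_tpath HT). auto. }
    subst u. apply in_map_iff. exists v. split; auto.
    rewrite E. apply in_or_app. left. auto.
Qed.

Lemma cone_minus_region c Bad (L : list V) :
  (forall t, Bad t -> In t L) -> (forall t, Bad t -> ~ tle adj s t c) ->
  region adj (cone_minus c Bad).
Proof.
  intros HL Hc. split; [|split].
  - exists c. split; auto. apply (tle_refl HT).
  - apply cone_minus_connected.
  - exact (cone_minus_boundary c HL).
Qed.

End Cones.

Section Rays.
Variable V : Type.
Variable adj : V -> V -> Prop.

Lemma ray_is_path R : is_ray adj R -> forall n, is_path adj (map R (seq 0 (S n))) (R 0) (R n).
Proof.
  intros [Hinj Hadj]. induction n as [|n IH].
  - repeat split; simpl; auto. constructor; auto. constructor. discriminate.
  - destruct IH as [N [W [H [L Ne]]]].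
    assert (E : map R (seq 0 (S (S n))) = map R (seq 0 (S n)) ++ [R (S n)]).
    { rewrite (seq_S (S n)), map_app. reflexivity. }
    rewrite E. split; [|split; [|split; [|split]]].
    + apply NoDup_app; auto. { constructor; auto. constructor. }
      intros a Ha [Hb|[]]. subst. apply in_map_iff in Ha. destruct Ha as [x [Hx Hin]].
      apply Hinj in Hx. apply in_seq in Hin. lia.
    + rewrite (seq_S n), map_app in W |- *. apply walk_rcons; auto.
    + reflexivity.
    + apply last_last.
    + destruct (map R (seq 0 (S n))); discriminate.
Qed.

Lemma ray_tle R m n : is_ray adj R -> m <= n -> tle adj (R 0) (R m) (R n).
Proof.
  intros HR Hmn. exists (map R (seq 0 (S n))). split; [apply ray_is_path; auto|].
  apply in_map. apply in_seq. lia.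
Qed.

Lemma ray_shift R n : is_ray adj R ->
  is_ray adj (fun k => R (n + k)) /\ ray_equiv R (fun k => R (n + k)).
Proof.
  intros [Hi Ha]. split; [split|].
  - intros a b H. apply Hi in H. lia.
  - intro k. replace (n + S k) with (S (n + k)) by lia. auto.
  - exists n, 0. auto.
Qed.

Lemma ray_eventually_avoids R (L : list V) : is_ray adj R ->
  exists N, forall n, N <= n -> ~ In (R n) L.
Proof.
  intros [Hi _]. induction L as [|a L IH].
  { exists 0. intros n _ []. }
  destruct IH as [N HN].
  destruct (classic (exists i, R i = a)) as [[i Hi']|Hna].
  - exists (Nat.max N (S i)). intros n Hn [H|H].
    + subst. apply Hi in H. lia.
    + apply (HN n); auto. lia.
  - exists N. intros n Hn [H|H]; [apply Hna; eauto|]. apply (HN n); auto.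
Qed.

(* The new ray runs along [A ++ [R m]] and then along [R] from [m] on. *)
Lemma ray_prepend_path R m (A : list V) s :
  is_ray adj R -> NoDup (A ++ [R m]) -> walk adj (A ++ [R m]) ->
  hd_error (A ++ [R m]) = Some s -> (forall j, m < j -> ~ In (R j) A) ->
  exists R', is_ray adj R' /\ R' 0 = s /\ ray_equiv R R'.
Proof.
  intros [Hi Ha] NA WA HA Hmax. set (A' := A ++ [R m]) in *.
  assert (NthM : nth (length A) A' s = R m) by (unfold A'; apply nth_middle).
  assert (Hlate : forall j, m < j -> ~ In (R j) A').
  { intros j Hj Hin. unfold A' in Hin. apply in_app_or in Hin.
    destruct Hin as [Hin|[Hin|[]]]; [exact (Hmax j Hj Hin)|apply Hi in Hin; lia]. }
  assert (LenA : length A' = S (length A)) by (unfold A'; rewrite length_app; simpl; lia).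
  set (R' := fun k => if k <=? length A then nth k A' s else R (m + (k - length A))).
  exists R'. split; [split|split].
  - intros a b Hab. unfold R' in Hab.
    destruct (Nat.leb_spec a (length A)) as [Ha'|Ha'];
    destruct (Nat.leb_spec b (length A)) as [Hb'|Hb'].
    + eapply NoDup_nth; eauto; lia.
    + exfalso. apply (Hlate (m + (b - length A))); [lia|]. rewrite <- Hab. apply nth_In. lia.
    + exfalso. apply (Hlate (m + (a - length A))); [lia|]. rewrite Hab. apply nth_In. lia.
    + apply Hi in Hab. lia.
  - intro k. unfold R'.
    destruct (Nat.leb_spec (S k) (length A)) as [H1|H1];
    destruct (Nat.leb_spec k (length A)) as [H2|H2]; try lia.
    + apply walk_nth; auto. lia.
    + assert (k = length A) by lia. subst k. rewrite NthM.
      replace (m + (S (length A) - length A)) with (S m) by lia. auto.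
    + replace (m + (S k - length A)) with (S (m + (k - length A))) by lia. auto.
  - unfold R'. simpl. destruct A' as [|x A''] eqn:EA; [discriminate|].
    simpl in HA |- *. congruence.
  - exists m, (length A). intro k. unfold R'.
    destruct (Nat.leb_spec (length A + k) (length A)) as [H1|H1].
    + assert (k = 0) by lia. subst k. rewrite !Nat.add_0_r, NthM. auto.
    + f_equal. lia.
Qed.

Lemma ray_equiv_refl (R : nat -> V) : ray_equiv R R.
Proof. exists 0, 0. auto. Qed.

Lemma ray_equiv_sym (R S : nat -> V) : ray_equiv R S -> ray_equiv S R.
Proof. intros [m [n H]]. exists n, m. intro k. auto. Qed.

Lemma ray_equiv_trans (R S T : nat -> V) : ray_equiv R S -> ray_equiv S T -> ray_equiv R T.
Proof.
  intros [m1 [n1 H1]] [m2 [n2 H2]]. exists (m1 + m2), (n2 + n1). intro k.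
  replace (m1 + m2 + k) with (m1 + (m2 + k)) by lia. rewrite H1.
  replace (n1 + (m2 + k)) with (m2 + (n1 + k)) by lia. rewrite H2. f_equal. lia.
Qed.

Lemma end_mem (e : tend adj) R S : proj1_sig e R ->
  (proj1_sig e S <-> is_ray adj S /\ ray_equiv R S).
Proof.
  destruct e as [E [R0 [HR0 HE]]]. simpl. intro HR.
  apply HE in HR. destruct HR as [_ HR]. rewrite HE. split; intros [H1 H2]; split; auto.
  - eapply ray_equiv_trans; eauto. apply ray_equiv_sym; auto.
  - eapply ray_equiv_trans; eauto.
Qed.

Lemma end_ray (e : tend adj) R : proj1_sig e R -> is_ray adj R.
Proof. intro H. apply (end_mem R H) in H. tauto. Qed.

Lemma end_nonempty (e : tend adj) : exists R, proj1_sig e R.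
Proof.
  destruct e as [E [R0 [HR0 HE]]]. exists R0. simpl. apply HE. split; auto.
  apply ray_equiv_refl.
Qed.

Lemma end_shift (e : tend adj) R n : proj1_sig e R -> proj1_sig e (fun k => R (n + k)).
Proof. intro HR. apply (end_mem _ HR). exact (ray_shift n (end_ray HR)). Qed.

Lemma end_common_tail (e : tend adj) R S : proj1_sig e R -> proj1_sig e S ->
  exists i j, forall k, S (i + k) = R (j + k).
Proof.
  intros HR HS. apply (end_mem S HR) in HS. destruct HS as [_ [m [n H]]].
  exists n, m. intro k. symmetry. auto.
Qed.

End Rays.

Lemma tree_ray_from V (adj : V -> V -> Prop) (HT : is_tree adj) s R :
  is_ray adj R -> exists R', is_ray adj R' /\ R' 0 = s /\ ray_equiv R R'.
Proof.
  intro HR. set (Q := tpath HT s (R 0)).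
  destruct (ray_eventually_avoids Q HR) as [N HN].
  destruct (@ex_max_nat (fun j => In (R j) Q) N) as [m [Hm Hmax]]; auto.
  { eapply is_path_last, tpath_spec. }
  apply in_split in Hm. destruct Hm as [A [B EQ]].
  destruct (is_path_prefix (tpath_spec HT s (R 0)) EQ) as [NA [WA [HA _]]].
  apply (ray_prepend_path HR NA WA HA). intros j Hj Hin. apply (Hmax j Hj).
  rewrite EQ. apply in_or_app. auto.
Qed.

Lemma countable_set_of_lists A (L : nat -> list A) (S : A -> Prop) :
  (forall a, S a -> exists n, In a (L n)) -> countable_set S.
Proof.
  intro HL. destruct (classic (exists a, S a)) as [[a0 _]|Hno].
  - right. exists (fun k => let (n, i) := of_nat k in nth i (L n) a0).
    intros a Ha. destruct (HL a Ha) as [n Hn]. destruct (In_nth _ _ a0 Hn) as [i [_ Hi]].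
    exists (to_nat (n, i)). rewrite cancel_of_to. exact Hi.
  - left. intros a Ha. apply Hno. eauto.
Qed.

Lemma enumeration_bound A (P : A -> Prop) (g : nat -> A) (L : list A) :
  (forall t, P t -> exists n, g n = t) ->
  exists N, forall t, In t L -> P t -> exists i, i < N /\ g i = t.
Proof.
  intro Hg. induction L as [|a L IH].
  { exists 0. intros t []. }
  destruct IH as [N HN].
  destruct (classic (P a)) as [Pa|Pa].
  - destruct (Hg a Pa) as [k Hk]. exists (Nat.max N (S k)).
    intros t [<-|Ht] Pt.
    + exists k. split; auto. lia.
    + destruct (HN t Ht Pt) as [i [Hi Hgi]]. exists i. split; auto. lia.
  - exists N. intros t [<-|Ht] Pt; [contradiction|]. auto.
Qed.

Section Topology.
Variable V : Type.
Variable adj : V -> V -> Prop.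
Hypothesis HT : is_tree adj.
Variable s : V.

Definition exits_in (C : V -> Prop) (l : list (V * V)) : Prop :=
  forall u v, C u -> ~ C v -> adj u v -> In (u, v) l.

Definition exit_ancestors (l : list (V * V)) : list V :=
  flat_map (fun e => tpath HT s (snd e)) l.

Lemma hull_open (C : V -> Prop) : region adj C -> topen (hull (adj := adj) C).
Proof. intros HC y Hy. exists C. auto. Qed.

Lemma hull_mono (C D : V -> Prop) y :
  (forall v, C v -> D v) -> hull (adj := adj) C y -> hull D y.
Proof.
  intro HCD. destruct y as [v|e]; simpl; auto.
  intros [R [HR HRC]]. exists R. auto.
Qed.

Lemma exit_edge_above (C : V -> Prop) c w : C c -> tle adj s c w -> ~ C w ->
  exists a b, adj a b /\ C a /\ ~ C b /\ tle adj s c b.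
Proof.
  intros Cc Hcw Cw. apply (tle_tpath HT) in Hcw. apply in_split in Hcw.
  destruct Hcw as [A [B E]].
  destruct (is_path_suffix (tpath_spec HT s w) E) as [_ [W [_ [L _]]]].
  destruct (walk_exit_edge W Cc) as [a [b [Hab [Ca [Cb Hb]]]]]; [congruence|].
  exists a, b. repeat split; auto.
  apply (is_path_tle_suffix HT (tpath_spec HT s w) E). right; auto.
Qed.

Lemma exit_ancestors_tle C l c w : exits_in C l -> C c -> tle adj s c w -> ~ C w ->
  In c (exit_ancestors l).
Proof.
  intros Hl Cc Hcw Cw. destruct (exit_edge_above Cc Hcw Cw) as [a [b [Hab [Ca [Cb Hcb]]]]].
  apply in_flat_map. exists (a, b). split; [apply Hl; auto|]. apply (tle_tpath HT), Hcb.
Qed.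

(* If [C t] fails then the edge [x t] itself leaves [C]. *)
Lemma exit_ancestors_child C l x t w : exits_in C l -> C x -> child adj s x t ->
  tle adj s t w -> ~ C w -> In t (exit_ancestors l).
Proof.
  intros Hl Cx Hch Htw Cw. destruct (classic (C t)) as [Ct|Ct].
  - exact (exit_ancestors_tle Hl Ct Htw Cw).
  - apply in_flat_map. exists (x, t). split; [apply Hl; auto; apply Hch|].
    eapply is_path_last, tpath_spec.
Qed.

Lemma up_not_hull_complement t p : up s t p ->
  ~ hull (adj := adj) (cone_minus adj s s (eq t)) p.
Proof.
  intros Hup. destruct p as [v|e]; simpl in Hup |- *.
  - intros [_ H]. exact (H t eq_refl Hup).
  - intros [S [HS HSD]]. destruct Hup as [R [HR [HR0 [m0 Hm0]]]].
    destruct (end_common_tail HR HS) as [i [j Hij]].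
    apply (proj2 (HSD (i + m0)) t eq_refl). rewrite Hij, <- Hm0, <- HR0.
    apply ray_tle; [eapply end_ray; eauto | lia].
Qed.

Lemma up_not_hull_witness (C : V -> Prop) t (p : tpoint adj) : up s t p -> ~ hull C p ->
  exists w, tle adj s t w /\ ~ C w.
Proof.
  intros Hup HnC. destruct p as [v|e]; simpl in Hup.
  - exists v. auto.
  - apply NNPP. intro Hno. apply HnC. destruct Hup as [R [HR [HR0 [m0 Hm0]]]].
    exists (fun k => R (m0 + k)). split; [exact (end_shift m0 HR)|].
    intro k. apply NNPP. intro Hk. apply Hno. exists (R (m0 + k)). split; auto.
    rewrite <- Hm0, <- HR0. apply ray_tle; [eapply end_ray; eauto|lia].
Qed.

(* Reroute a ray of [e] through the root; it leaves [x] through the child [t]. *)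
Lemma end_through_child (e : tend adj) R x : proj1_sig e R -> (forall k, tle adj s x (R k)) ->
  exists t m, child adj s x t /\ up s t (End e) /\ forall k, tle adj s t (R (m + k)).
Proof.
  intros HR Hx.
  destruct (tree_ray_from HT s (end_ray HR)) as [Rr [HRr [HRr0 Heq]]].
  assert (HRre : proj1_sig e Rr) by (apply (end_mem _ HR); auto).
  destruct (end_common_tail HR HRre) as [i [j Hij]].
  assert (HxRi : In x (tpath HT s (Rr i))).
  { apply (tle_tpath HT). rewrite <- (Nat.add_0_r i), Hij. apply Hx. }
  rewrite <- HRr0, (tpath_eq HT (ray_is_path HRr i)) in HxRi.
  apply in_map_iff in HxRi. destruct HxRi as [i0 [<- Hi0]]. apply in_seq in Hi0.
  exists (Rr (S i0)), (j + 1). repeat split.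
  - apply HRr.
  - rewrite <- HRr0. apply ray_tle; auto.
  - exists Rr. eauto.
  - intro k. replace (j + 1 + k) with (j + (1 + k)) by lia. rewrite <- Hij, <- HRr0.
    apply ray_tle; auto. lia.
Qed.

End Topology.

Definition countable_base_at (P : Type) (open : (P -> Prop) -> Prop) (X : P -> Prop) (x : P)
    : Prop :=
  exists B : nat -> P -> Prop,
    (forall n, open (B n) /\ B n x) /\
    (forall U, open U -> U x -> exists n, forall y, X y -> B n y -> U y).

Section FirstCountable.
Variable V : Type.
Variable adj : V -> V -> Prop.
Hypothesis HT : is_tree adj.
Variable r : V.
Variable X : tpoint adj -> Prop.

Definition relevant_child (x t : V) : Prop :=
  child adj r x t /\ exists p, up r t p /\ X p.

Lemma countable_relevant_children x :
  countable_base_at (topen (adj := adj)) X (Vtx adj x) -> countable_set (relevant_child x).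
Proof.
  intros [B [HB HBbase]].
  destruct (choice (fun n l =>
    exists C, C x /\ (forall y, hull (adj := adj) C y -> B n y) /\ exits_in adj C l)) as [l Hl].
  { intro n. destruct (HB n) as [Ho Hbx].
    destruct (Ho _ Hbx) as [C [[_ [_ [l Hl]]] [HCx HCB]]]. eauto. }
  apply (countable_set_of_lists (L := fun n => exit_ancestors HT r (l n))).
  intros t [Hch [p [Hup HXp]]].
  assert (Htr : ~ tle adj r t r).
  { intro H. exact (child_not_tle HT Hch (tle_trans HT H (tle_root HT r x))). }
  assert (HD : region adj (cone_minus adj r r (eq t))).
  { apply (cone_minus_region HT (L := [t])); [intros z <-; left; auto | intros z <-; auto]. }
  assert (HDx : cone_minus adj r r (eq t) x).
  { split; [apply (tle_root HT)|intros z <-; exact (child_not_tle HT Hch)]. }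
  destruct (HBbase _ (hull_open HD) HDx) as [n Hn].
  destruct (Hl n) as [C [HCx [HCB HCl]]].
  destruct (up_not_hull_witness (C := C) Hup) as [w [Htw HCw]].
  { intro HC. exact (up_not_hull_complement Hup (Hn p HXp (HCB p HC))). }
  exists n. exact (exit_ancestors_child HT HCl HCx Hch Htw HCw).
Qed.

Lemma vertex_countable_base x : countable_set (relevant_child x) ->
  countable_base_at (topen (adj := adj)) X (Vtx adj x).
Proof.
  intros Hc.
  assert (exists g : nat -> V, forall t, relevant_child x t -> exists n, g n = t) as [g Hg].
  { destruct Hc as [Hemp|[g Hg]]; [|eauto].
    exists (fun _ => x). intros t Ht. exfalso. exact (Hemp t Ht). }
  set (Bad := fun n t => child adj r x t /\ exists i, i < n /\ g i = t).
  set (D := fun n => cone_minus adj r x (Bad n)).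
  assert (HDx : forall n, D n x).
  { split; [apply (tle_refl HT)|intros t [Hch _]; exact (child_not_tle HT Hch)]. }
  exists (fun n => hull (D n)). split.
  { intro n. split; [|exact (HDx n)]. apply hull_open.
    apply (cone_minus_region HT (L := map g (seq 0 n))).
    - intros t [_ [i [Hi <-]]]. apply in_map. apply in_seq. lia.
    - intros t [Hch _]. exact (child_not_tle HT Hch). }
  intros U HU HUx. destruct (HU _ HUx) as [C [[_ [_ [l Hl]]] [HCx HCU]]].
  destruct (enumeration_bound (exit_ancestors HT r l) Hg) as [N HN].
  assert (Hcone : forall t v, relevant_child x t -> tle adj r t v -> D N v ->
                    forall w, tle adj r t w -> C w).
  { intros t v Ht Htv HDv w Htw. apply NNPP. intro Cw.
    destruct (HN t (exit_ancestors_child HT Hl HCx (proj1 Ht) Htw Cw) Ht) as [i [Hi Hgi]].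
    exact (proj2 HDv t (conj (proj1 Ht) (ex_intro _ i (conj Hi Hgi))) Htv). }
  exists N. intros y HXy HyD. apply HCU. destruct y as [v|e].
  - simpl in HyD |- *. destruct (classic (v = x)) as [->|Hne]; auto.
    destruct (tle_child_exists HT (proj1 HyD) Hne) as [t [Hch Htv]].
    exact (Hcone t v (conj Hch (ex_intro _ (Vtx adj v) (conj Htv HXy))) Htv HyD v Htv).
  - destruct HyD as [R [HR HRD]].
    destruct (end_through_child HT HR (fun k => proj1 (HRD k))) as [t [m [Hch [Hup Htm]]]].
    exists (fun k => R (m + k)). split; [exact (end_shift m HR)|].
    intro k. apply (Hcone t (R (m + 0))); auto.
    split; [exact Hch|exists (End e); auto].
Qed.

End FirstCountable.

Lemma end_countable_base V (adj : V -> V -> Prop) (HT : is_tree adj) X (e : tend adj) :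
  countable_base_at (topen (adj := adj)) X (End e).
Proof.
  destruct (end_nonempty e) as [R HR].
  set (D := fun n => cone_minus adj (R 0) (R n) (fun _ => False)).
  exists (fun n => hull (D n)). split.
  { intro n. split.
    - apply hull_open. apply (cone_minus_region HT (L := [])); intros t [].
    - exists (fun k => R (n + k)). split; [exact (end_shift n HR)|].
      intro k. split; [apply ray_tle; [exact (end_ray HR)|lia]|intros t []]. }
  intros U HU HUe. destruct (HU _ HUe) as [C [[_ [_ [l Hl]]] [[S [HS HSC]] HCU]]].
  destruct (end_common_tail HR HS) as [i [j Hij]].
  destruct (ray_eventually_avoids (exit_ancestors HT (R 0) l) (end_ray HR)) as [N0 HN0].
  set (n := Nat.max N0 j). exists n.
  assert (HCRn : C (R n)) by (replace n with (j + (n - j)) by lia; rewrite <- Hij; auto).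
  intros y _ Hy. apply HCU. apply (hull_mono (C := D n)); [|exact Hy].
  intros w [Hw _]. apply NNPP. intro Cw.
  exact (HN0 n (Nat.le_max_l _ _) (exit_ancestors_tle HT Hl HCRn Hw Cw)).
Qed.

Theorem lemma3p2 (V : Type) (adj : V -> V -> Prop) (r : V)
    (HT : is_tree adj) (X : tpoint adj -> Prop) :
  first_countable (@topen V adj) X <->
  (forall x : V, X (@Vtx V adj x) ->
     countable_set (fun t : V =>
       @child V adj r x t /\ exists p : tpoint adj, @up V adj r t p /\ X p)).
Proof.
  split.
  - intros Hfc x Hx. exact (countable_relevant_children HT r (Hfc _ Hx)).
  - intros Hc [x|e] Hy.
    + exact (vertex_countable_base HT (Hc x Hy)).
    + exact (end_countable_base HT X e).
Qed.
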